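(* For $0<\mu<1$ and $x\in\mathbb T^2$ let $K^+(x)=\{v=(v_1,v_2)\in\mathbb R^2:|v_2|<\mu|v_1|\}$ and $K^-(x)=\{v=(v_1,v_2):|v_1|<\mu|v_2|\}$ (tangent vectors written in the coordinates given by the eigendirections of $A$). There exists $0<\mu_0<1$ such that for all $\mu_0<\mu<1$ and all $x\in\mathbb T^2$, $$DG\,K^+(x)\subseteq K^+(G(x)),\qquad (DG)^{-1}K^-(G(x))\subseteq K^-(x).$$
   Context: Let $A=\begin{pmatrix}2&1\\1&1\end{pmatrix}$ on $\mathbb T^2$, $\lambda>1$ its largest eigenvalue, $(s_1,s_2)$ eigen-coordinates ($s_1$ expanding, $s_2$ contracting). Fix $0<\alpha<1$, $0<r_0<1$ and $\psi:[0,1]\to[0,1]$, $C^\infty$ except at $0$, with $\psi=1$ on $[r_0,1]$, $\psi'>0$ and decreasing on $(0,r_0)$, and $\psi(u)=(u/r_0)^\alpha$ for $0\le u\le r_0/2$. Let $D_r=\{s_1^2+s_2^2\le r\}$ (with $D_{r_0}\subset\mathrm{Int}\,A(D_{r_1})\cap\mathrm{Int}\,A^{-1}(D_{r_1})$, $r_1=2r_0\log\lambda$). $G$ is the homeomorphism of $\mathbb T^2$ equal to $A$ outside $D_{r_0}$ and, on $D_{r_0}$, to the time-one map of the flow $\dot s_1=s_1\psi(s_1^2+s_2^2)\log\lambda$, $\dot s_2=-s_2\psi(s_1^2+s_2^2)\log\lambda$. *)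

From Stdlib Require Import Reals.
From Coquelicot Require Import Coquelicot.
Open Scope R_scope.

(** Largest eigenvalue of A = [[2,1],[1,1]]. *)
Definition lam : R := (3 + sqrt 5) / 2.

(** Eigen-coordinates (s1,s2) of a point/vector x = (x1,x2) of R^2, w.r.t. the
    orthonormal eigenbasis e1 = (1, lam-2)/N (expanding, eigenvalue lam),
    e2 = (-(lam-2), 1)/N (contracting, eigenvalue 1/lam). *)
Definition eigN : R := sqrt (1 + (lam - 2) ^ 2).
Definition eig (x : R * R) : R * R :=
  ((fst x + (lam - 2) * snd x) / eigN, (- (lam - 2) * fst x + snd x) / eigN).

Definition latt (m n : Z) : R * R := eig (IZR m, IZR n).

(** The linear map A in eigen-coordinates: diag(lam, 1/lam). *)
Definition Aeig (s : R * R) : R * R := (lam * fst s, snd s / lam).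

Definition in_disk (r : R) (m n : Z) (p : R * R) : Prop :=
  (fst p - fst (latt m n)) ^ 2 + (snd p - snd (latt m n)) ^ 2 <= r.

(** The vector field  s1' = s1 psi(s1^2+s2^2) log lam,
                       s2' = - s2 psi(s1^2+s2^2) log lam
    (psi is only given on [0,1]; it is extended by its value 1 beyond 1). *)
Definition vfield (psi : R -> R) (s : R * R) : R * R :=
  let c := psi (Rmin (fst s ^ 2 + snd s ^ 2) 1) * ln lam in
  (fst s * c, - (snd s * c)).

Definition psi_ok (alpha r0 : R) (psi : R -> R) : Prop :=
  (forall u, 0 <= u <= 1 -> 0 <= psi u <= 1) /\
  (forall k u, 0 < u < 1 -> ex_derive_n psi k u) /\
  (forall u, r0 <= u <= 1 -> psi u = 1) /\
  (forall u, 0 < u < r0 -> 0 < Derive psi u) /\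
  (forall u w, 0 < u -> u <= w -> w < r0 -> Derive psi w <= Derive psi u) /\
  psi 0 = 0 /\
  (forall u, 0 < u <= r0 / 2 -> psi u = Rpower (u / r0) alpha).

Definition is_flow (psi : R -> R) (phi : R -> R * R -> R * R) : Prop :=
  (forall p, phi 0 p = p) /\
  (forall t p, is_derive (fun t => phi t p) t (vfield psi (phi t p))).

(** G (lifted to R^2, in eigen-coordinates): time-one map of the flow on the
    disks D_{r0} around the lattice points, and A elsewhere. *)
Definition is_G (r0 : R) (phi : R -> R * R -> R * R) (G : R * R -> R * R) : Prop :=
  (forall m n p, in_disk r0 m n p ->
     let q := (fst p - fst (latt m n), snd p - snd (latt m n)) in
     G p = (fst (Aeig (latt m n)) + fst (phi 1 q),
            snd (Aeig (latt m n)) + snd (phi 1 q))) /\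
  (forall p, (forall m n, ~ in_disk r0 m n p) -> G p = Aeig p).

Definition Kplus (mu : R) (v : R * R) : Prop := Rabs (snd v) < mu * Rabs (fst v).
Definition Kminus (mu : R) (v : R * R) : Prop := Rabs (fst v) < mu * Rabs (snd v).

(* Write [K^+ = {cone_form mu < 0}] and [K^- = {cone_form (1/mu) > 0}] with
   [cone_form k v = v2^2 - k^2 v1^2]; it suffices that [DG] does not increase
   [cone_form k] for every [k] in [[1/2, 2]], which gives [mu0 = 1/2].
   Away from the disks [DG = A = diag(lam, 1/lam)], which clearly does not.
   Inside a disk [G] is the time-one map of the field [h(|s|^2) (s1, -s2)],
   where [h >= 0] is nondecreasing and [h(x)/x] is nonincreasing (concavity of
   [psi]); along two trajectories [a], [b] the quantity [cone_form k (b - a)]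
   then decreases, so finite differences of [G], and hence [DG], do not increase
   it. At a point [p] the derivative is read off along rays [p + t v], t -> 0+:
   the disks are uniformly separated, so a short ray either stays in one disk
   or avoids all of them, and in the latter case differentiability forces
   [G p = A p] even if [p] lies on the boundary of a disk. *)

From Stdlib Require Import Reals Lra Psatz ZArith Classical.
From Coquelicot Require Import Coquelicot.
Open Scope R_scope.

Definition vsub (a b : R * R) : R * R := (fst a - fst b, snd a - snd b).

Definition cone_form (k : R) (v : R * R) : R := snd v ^ 2 - k ^ 2 * fst v ^ 2.

Definition ray (p v : R * R) (t : R) : R * R := (fst p + t * fst v, snd p + t * snd v).

Lemma Kplus_cone_form mu v : 0 <= mu -> Kplus mu v <-> cone_form mu v < 0.
Proof.
  intros Hmu. unfold Kplus, cone_form.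
  rewrite <- (Rabs_pos_eq mu) at 1 by exact Hmu. rewrite <- Rabs_mult.
  split; intros H.
  - apply Rsqr_lt_abs_1 in H. rewrite !Rsqr_pow2 in H. lra.
  - apply Rsqr_lt_abs_0. rewrite !Rsqr_pow2. lra.
Qed.

Lemma Kminus_cone_form mu w : 0 < mu -> Kminus mu w <-> 0 < cone_form (/ mu) w.
Proof.
  intros Hmu. unfold Kminus, cone_form.
  replace ((/ mu) ^ 2 * fst w ^ 2) with ((fst w / mu) ^ 2) by (field; lra).
  rewrite <- !Rsqr_pow2.
  assert (E : Rabs (fst w / mu) * mu = Rabs (fst w)).
  { unfold Rdiv. rewrite Rabs_mult, Rabs_inv, (Rabs_pos_eq mu) by lra. field. lra. }
  split; intros H.
  - cut ((fst w / mu)² < (snd w)²); [lra|].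
    apply Rsqr_lt_abs_1. apply (Rmult_lt_reg_r mu); [exact Hmu|]. lra.
  - assert (Hlt : Rabs (fst w / mu) < Rabs (snd w)) by (apply Rsqr_lt_abs_0; lra).
    rewrite <- E. rewrite (Rmult_comm mu). apply Rmult_lt_compat_r; assumption.
Qed.

Lemma cone_form_scal k t v : cone_form k (t * fst v, t * snd v) = t ^ 2 * cone_form k v.
Proof. unfold cone_form; cbn [fst snd]. ring. Qed.

Lemma lam_gt_1 : 1 < lam.
Proof. unfold lam. generalize (sqrt_pos 5). lra. Qed.

Lemma cone_form_Aeig_le k v : cone_form k (Aeig v) <= cone_form k v.
Proof.
  unfold cone_form, Aeig; cbn [fst snd]. assert (Hl := lam_gt_1).
  assert (Hl2 : 1 <= lam ^ 2) by nra.
  replace ((snd v / lam) ^ 2) with (snd v ^ 2 / lam ^ 2) by (field; lra).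
  assert (snd v ^ 2 / lam ^ 2 <= snd v ^ 2).
  { apply (Rmult_le_reg_r (lam ^ 2)); [lra|].
    replace (snd v ^ 2 / lam ^ 2 * lam ^ 2) with (snd v ^ 2) by (field; lra).
    generalize (pow2_ge_0 (snd v)). nra. }
  generalize (pow2_ge_0 k) (pow2_ge_0 (fst v)). nra.
Qed.

Lemma binary_quadratic_nonneg al be ga x y :
  0 <= al -> 0 <= ga -> be ^ 2 <= al * ga -> 0 <= al * x ^ 2 + 2 * be * x * y + ga * y ^ 2.
Proof.
  intros Hal Hga Hdisc.
  destruct (Req_dec al 0) as [->|Hal0].
  - assert (be = 0) by nra. subst. nra.
  - apply (Rmult_le_reg_l al); [lra|].
    replace (al * (al * x ^ 2 + 2 * be * x * y + ga * y ^ 2))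
      with ((al * x + be * y) ^ 2 + (al * ga - be ^ 2) * y ^ 2) by ring.
    generalize (pow2_ge_0 (al * x + be * y)) (pow2_ge_0 y). nra.
Qed.

Lemma cone_mixed_form_nonneg k m1 m2 d1 d2 : 1 / 2 <= k <= 2 ->
  0 <= (m1 ^ 2 + m2 ^ 2) * (d2 ^ 2 + k ^ 2 * d1 ^ 2)
       + 4 * (m1 * d1 + m2 * d2) * (d2 * m2 + k ^ 2 * d1 * m1).
Proof.
  intros Hk.
  replace ((m1 ^ 2 + m2 ^ 2) * (d2 ^ 2 + k ^ 2 * d1 ^ 2)
           + 4 * (m1 * d1 + m2 * d2) * (d2 * m2 + k ^ 2 * d1 * m1))
    with ((d2 ^ 2 + 5 * k ^ 2 * d1 ^ 2) * m1 ^ 2 + 2 * (2 * (1 + k ^ 2) * d1 * d2) * m1 * m2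
          + (5 * d2 ^ 2 + k ^ 2 * d1 ^ 2) * m2 ^ 2) by ring.
  assert (Hk2 : 0 <= 9 * k ^ 2 - (1 + k ^ 2) ^ 2).
  { replace (9 * k ^ 2 - (1 + k ^ 2) ^ 2) with ((3 * k - 1 - k ^ 2) * (3 * k + 1 + k ^ 2)) by ring.
    assert (0 <= (k - 1 / 2) * (2 - k)) by (apply Rmult_le_pos; lra).
    assert (0 <= 3 * k - 1 - k ^ 2) by nra.
    apply Rmult_le_pos; nra. }
  generalize (pow2_ge_0 d1) (pow2_ge_0 d2) (pow2_ge_0 k). intros Hd1 Hd2 Hk0.
  apply binary_quadratic_nonneg; [nra|nra|].
  assert (E : (d2 ^ 2 + 5 * k ^ 2 * d1 ^ 2) * (5 * d2 ^ 2 + k ^ 2 * d1 ^ 2)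
               - (2 * (1 + k ^ 2) * d1 * d2) ^ 2
             = 5 * (k ^ 2 * d1 ^ 2 - d2 ^ 2) ^ 2
               + 4 * (d1 ^ 2 * d2 ^ 2) * (9 * k ^ 2 - (1 + k ^ 2) ^ 2)) by ring.
  generalize (pow2_ge_0 (k ^ 2 * d1 ^ 2 - d2 ^ 2)). nra.
Qed.

(* In midpoint/half-difference coordinates the expression is
   [- (ha + hb) W - 2 (hb - ha) T]; the bad case [T < 0] is controlled by
   [cone_mixed_form_nonneg] together with [hb |a|^2 <= ha |b|^2]. *)
Lemma radial_dissipation_ordered k a1 a2 b1 b2 ha hb :
  1 / 2 <= k <= 2 -> 0 <= ha -> ha <= hb ->
  hb * (a1 ^ 2 + a2 ^ 2) <= ha * (b1 ^ 2 + b2 ^ 2) -> a1 ^ 2 + a2 ^ 2 <= b1 ^ 2 + b2 ^ 2 ->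
  2 * (b2 - a2) * (- (hb * b2) + ha * a2) - k ^ 2 * (2 * (b1 - a1) * (hb * b1 - ha * a1)) <= 0.
Proof.
  intros Hk Ha Hab Hc Hn.
  assert (Hm := cone_mixed_form_nonneg k ((a1 + b1) / 2) ((a2 + b2) / 2) (b1 - a1) (b2 - a2) Hk).
  remember ((a1 + b1) / 2) as m1 eqn:Em1. remember ((a2 + b2) / 2) as m2 eqn:Em2.
  remember (b1 - a1) as d1 eqn:Ed1. remember (b2 - a2) as d2 eqn:Ed2.
  remember (d2 ^ 2 + k ^ 2 * d1 ^ 2) as W eqn:EW.
  remember (d2 * m2 + k ^ 2 * d1 * m1) as T eqn:ET.
  remember (a1 ^ 2 + a2 ^ 2) as Na eqn:ENa. remember (b1 ^ 2 + b2 ^ 2) as Nb eqn:ENb.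
  replace (2 * d2 * (- (hb * b2) + ha * a2) - k ^ 2 * (2 * d1 * (hb * b1 - ha * a1)))
    with (- ((ha + hb) * W) - 2 * (hb - ha) * T) by (subst; field).
  assert (HW : 0 <= W) by (subst W; generalize (pow2_ge_0 d1) (pow2_ge_0 d2) (pow2_ge_0 k); nra).
  destruct (Rle_or_lt 0 T) as [HT|HT]; [nra|].
  assert (HNa : 0 <= Na) by (subst Na; generalize (pow2_ge_0 a1) (pow2_ge_0 a2); lra).
  assert (Em : m1 ^ 2 + m2 ^ 2 = (Na + Nb) / 2 - (d1 ^ 2 + d2 ^ 2) / 4) by (subst; field).
  assert (Ed : m1 * d1 + m2 * d2 = (Nb - Na) / 2) by (subst; field).
  assert (HmNb : m1 ^ 2 + m2 ^ 2 <= Nb) by (generalize (pow2_ge_0 d1) (pow2_ge_0 d2); lra).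
  assert (HNb : 0 < Nb).
  { destruct (Rle_or_lt Nb 0) as [H|H]; [exfalso|exact H].
    assert (d1 ^ 2 + d2 ^ 2 <= 0) by (generalize (pow2_ge_0 m1) (pow2_ge_0 m2); lra).
    assert (Hd1 : d1 = 0) by (generalize (pow2_ge_0 d1) (pow2_ge_0 d2); nra).
    assert (Hd2 : d2 = 0) by (generalize (pow2_ge_0 d1) (pow2_ge_0 d2); nra).
    rewrite ET, Hd1, Hd2 in HT. lra. }
  rewrite Ed in Hm.
  assert (Hmid : hb * ((m1 ^ 2 + m2 ^ 2) * W) <= Nb * ((ha + hb) * W)).
  { assert (0 <= ha * (Nb * W)) by (apply Rmult_le_pos; [lra|apply Rmult_le_pos; lra]).
    assert (0 <= hb * (W * (Nb - (m1 ^ 2 + m2 ^ 2))))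
      by (apply Rmult_le_pos; [lra|apply Rmult_le_pos; lra]).
    nra. }
  assert (Hcross : 0 <= hb * ((m1 ^ 2 + m2 ^ 2) * W + 4 * ((Nb - Na) / 2) * T))
    by (apply Rmult_le_pos; lra).
  assert (0 <= (ha + hb) * W + 2 * (hb - ha) * T).
  { apply (Rmult_le_reg_l Nb); [exact HNb|]. nra. }
  lra.
Qed.

Definition radial_field (h : R -> R) (s : R * R) : R * R :=
  (fst s * h (fst s ^ 2 + snd s ^ 2), - (snd s * h (fst s ^ 2 + snd s ^ 2))).

(* [cone_dissipative k X]: along any two trajectories [a], [b] of [X], the
   time derivative of [cone_form k (b - a)] is nonpositive. *)
Definition cone_dissipative (k : R) (X : R * R -> R * R) : Prop :=
  forall a b : R * R,
    2 * (snd b - snd a) * (snd (X b) - snd (X a))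
    - k ^ 2 * (2 * (fst b - fst a) * (fst (X b) - fst (X a))) <= 0.

Lemma radial_field_cone_dissipative (h : R -> R) k :
  1 / 2 <= k <= 2 ->
  (forall x, 0 <= x -> 0 <= h x) ->
  (forall x y, 0 <= y <= x -> h y <= h x /\ h x * y <= h y * x) ->
  cone_dissipative k (radial_field h).
Proof.
  intros Hk Hpos Hmono a b. unfold radial_field; cbn [fst snd].
  set (Na := fst a ^ 2 + snd a ^ 2). set (Nb := fst b ^ 2 + snd b ^ 2).
  assert (HNa : 0 <= Na) by (unfold Na; generalize (pow2_ge_0 (fst a)) (pow2_ge_0 (snd a)); lra).
  assert (HNb : 0 <= Nb) by (unfold Nb; generalize (pow2_ge_0 (fst b)) (pow2_ge_0 (snd b)); lra).
  destruct (Rle_or_lt Na Nb) as [Hn|Hn].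
  - destruct (Hmono Nb Na (conj HNa Hn)) as [H1 H2].
    replace (- (snd b * h Nb) - - (snd a * h Na)) with (- (h Nb * snd b) + h Na * snd a) by ring.
    replace (fst b * h Nb - fst a * h Na) with (h Nb * fst b - h Na * fst a) by ring.
    apply radial_dissipation_ordered; auto.
  - destruct (Hmono Na Nb (conj HNb (Rlt_le _ _ Hn))) as [H1 H2].
    assert (D := radial_dissipation_ordered k (fst b) (snd b) (fst a) (snd a) (h Nb) (h Na)
                   Hk (Hpos _ HNb) H1 H2 (Rlt_le _ _ Hn)).
    lra.
Qed.

Section Psi.

Variables (alpha r0 : R) (psi : R -> R).
Hypothesis r0_range : 0 < r0 < 1.
Hypothesis psi_spec : psi_ok alpha r0 psi.

Lemma psi_range u : 0 <= u <= 1 -> 0 <= psi u <= 1.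
Proof. apply psi_spec. Qed.

Lemma psi_eq_1 u : r0 <= u <= 1 -> psi u = 1.
Proof. apply psi_spec. Qed.

Lemma psi_0 : psi 0 = 0.
Proof. apply psi_spec. Qed.

Lemma Derive_psi_pos u : 0 < u < r0 -> 0 < Derive psi u.
Proof. apply psi_spec. Qed.

Lemma Derive_psi_antitone u w : 0 < u -> u <= w -> w < r0 -> Derive psi w <= Derive psi u.
Proof. apply psi_spec. Qed.

Lemma psi_derivable u : 0 < u < 1 -> derivable_pt_lim psi u (Derive psi u).
Proof.
  intros Hu. apply is_derive_Reals, Derive_correct.
  exact (proj1 (proj2 psi_spec) 1%nat u Hu).
Qed.

Lemma psi_le y x : 0 <= y <= x -> x <= 1 -> psi y <= psi x.
Proof.
  intros Hy Hx.
  destruct (Rle_or_lt r0 x) as [Hr|Hr].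
  { rewrite (psi_eq_1 x) by lra. apply psi_range. lra. }
  destruct (Rle_lt_or_eq _ _ (proj1 Hy)) as [Hy0|<-].
  2: { rewrite psi_0. apply psi_range. lra. }
  destruct (Req_dec y x) as [->|Hyx]; [lra|].
  destruct (MVT_cor2 psi (Derive psi) y x) as [c [Hc1 Hc2]]; [lra| |].
  { intros c Hc. apply psi_derivable. lra. }
  assert (0 < Derive psi c) by (apply Derive_psi_pos; lra). nra.
Qed.

(* By concavity of [psi] on [(0, r0)]: [psi u >= psi e + (u - e) psi'(u)], and [psi e >= 0]. *)
Lemma mul_Derive_psi_le u : 0 < u < r0 -> u * Derive psi u <= psi u.
Proof.
  intros Hu.
  assert (Hd := Derive_psi_pos u Hu).
  destruct (Rle_or_lt (u * Derive psi u) (psi u)) as [H|H]; [exact H|exfalso].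
  set (e := Rmin (u / 2) ((u * Derive psi u - psi u) / (2 * Derive psi u))).
  assert (He : 0 < e) by (apply Rmin_pos; [lra|apply Rdiv_lt_0_compat; lra]).
  assert (He1 : e <= u / 2) by apply Rmin_l.
  assert (He2 : e * Derive psi u <= (u * Derive psi u - psi u) / 2).
  { assert (Hle : e <= (u * Derive psi u - psi u) / (2 * Derive psi u)) by apply Rmin_r.
    apply (Rmult_le_compat_r (Derive psi u)) in Hle; [|lra].
    replace ((u * Derive psi u - psi u) / (2 * Derive psi u) * Derive psi u)
      with ((u * Derive psi u - psi u) / 2) in Hle by (field; lra). exact Hle. }
  destruct (MVT_cor2 psi (Derive psi) e u) as [c [Hc1 Hc2]]; [lra| |].
  { intros c Hc. apply psi_derivable. lra. }
  assert (Derive psi u <= Derive psi c) by (apply Derive_psi_antitone; lra).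
  assert (0 <= psi e) by (apply psi_range; lra).
  nra.
Qed.

Lemma psi_mul_le y x : 0 <= y <= x -> x <= 1 -> psi x * y <= psi y * x.
Proof.
  intros Hy Hx.
  destruct (Rle_lt_or_eq _ _ (proj1 Hy)) as [Hy0|<-].
  2: { rewrite psi_0. generalize (psi_range x ltac:(lra)). nra. }
  destruct (Rle_or_lt r0 y) as [Hr|Hr].
  { rewrite (psi_eq_1 x), (psi_eq_1 y) by lra. lra. }
  set (x' := Rmin x r0).
  assert (Hx'1 : x' <= x) by apply Rmin_l.
  assert (Hx'2 : x' <= r0) by apply Rmin_r.
  assert (Hx'3 : y <= x') by (apply Rmin_glb; lra).
  assert (Hpx : psi x = psi x').
  { unfold x'. destruct (Rle_or_lt x r0).
    - rewrite Rmin_left; auto.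
    - rewrite Rmin_right, !psi_eq_1; lra. }
  clearbody x'.
  (* [z |-> psi z * y - psi y * z] is nonincreasing on [[y, x']] *)
  assert (K : psi x' * y <= psi y * x').
  { destruct (Req_dec y x') as [E|E]; [rewrite <- E; lra|].
    destruct (MVT_cor2 (fun z => psi z * y - psi y * z) (fun z => Derive psi z * y - psi y) y x')
      as [c [Hc1 Hc2]]; [lra| |].
    { intros c Hc. apply is_derive_Reals.
      replace (Derive psi c * y - psi y) with (Derive psi c * y - psi y * 1) by ring.
      apply (is_derive_minus (fun z => psi z * y) (fun z => psi y * z)).
      - apply (is_derive_scal_l psi c (Derive psi c) y).
        apply is_derive_Reals, psi_derivable. lra.
      - apply is_derive_scal, (is_derive_id (K := R_AbsRing)). }
    assert (Derive psi c <= Derive psi y) by (apply Derive_psi_antitone; lra).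
    assert (y * Derive psi y <= psi y) by (apply mul_Derive_psi_le; lra).
    assert (Derive psi c * y - psi y <= 0) by nra.
    assert (0 <= x' - y) by lra.
    nra. }
  rewrite Hpx. generalize (psi_range y ltac:(lra)). nra.
Qed.

Definition flow_rate (x : R) : R := psi (Rmin x 1) * ln lam.

Lemma ln_lam_pos : 0 < ln lam.
Proof.
  rewrite <- ln_1. apply ln_increasing; [lra|apply lam_gt_1].
Qed.

Lemma flow_rate_nonneg x : 0 <= x -> 0 <= flow_rate x.
Proof.
  intros Hx. apply Rmult_le_pos; [|left; apply ln_lam_pos].
  apply psi_range. split; [apply Rmin_glb; lra|apply Rmin_r].
Qed.

Lemma flow_rate_monotone x y :
  0 <= y <= x -> flow_rate y <= flow_rate x /\ flow_rate x * y <= flow_rate y * x.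
Proof.
  intros Hxy. unfold flow_rate. assert (Hl := ln_lam_pos).
  assert (Hmin : 0 <= Rmin y 1 <= Rmin x 1)
    by (split; [apply Rmin_glb|apply Rle_min_compat_r]; lra).
  split.
  - apply Rmult_le_compat_r; [lra|]. apply psi_le; [exact Hmin|apply Rmin_r].
  - enough (psi (Rmin x 1) * y <= psi (Rmin y 1) * x) by nra.
    destruct (Rle_or_lt y 1) as [Hy|Hy].
    + rewrite (Rmin_left y) in * by exact Hy.
      assert (psi (Rmin x 1) * y <= psi y * Rmin x 1)
        by (apply psi_mul_le; [exact Hmin|apply Rmin_r]).
      assert (Rmin x 1 <= x) by apply Rmin_l.
      generalize (psi_range y ltac:(lra)). nra.
    + rewrite !Rmin_right by lra. generalize (psi_range 1 ltac:(lra)). nra.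
Qed.

End Psi.

Local Notation R2 := (prod_NormedModule R_AbsRing R_NormedModule R_NormedModule).

Lemma is_derive_fst (f : R -> R * R) t l :
  is_derive f t l -> is_derive (fun s => fst (f s)) t (fst l).
Proof.
  intros H.
  apply (filterdiff_ext_lin _ (fun y : R => fst (scal (V := R2) y l))); [|reflexivity].
  apply (filterdiff_comp' (V := R2) f fst t (fun y : R => scal y l) fst H).
  apply filterdiff_linear, is_linear_fst.
Qed.

Lemma is_derive_snd (f : R -> R * R) t l :
  is_derive f t l -> is_derive (fun s => snd (f s)) t (snd l).
Proof.
  intros H.
  apply (filterdiff_ext_lin _ (fun y : R => snd (scal (V := R2) y l))); [|reflexivity].
  apply (filterdiff_comp' (V := R2) f snd t (fun y : R => scal y l) snd H).
  apply filterdiff_linear, is_linear_snd.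
Qed.

Lemma is_derive_sqr_sub (f g : R -> R) t df dg :
  is_derive f t df -> is_derive g t dg ->
  is_derive (fun s => (f s - g s) ^ 2) t (2 * (df - dg) * (f t - g t)).
Proof.
  intros Hf Hg.
  assert (H := is_derive_pow _ 2 t _ (is_derive_minus f g t df dg Hf Hg)). simpl in H.
  eapply is_derive_ext; [|eapply filterdiff_ext_lin; [exact H|]].
  - intros s. reflexivity.
  - intros y.
    change (y * ((1 + 1) * (df - dg) * ((f t - g t) * 1)) = y * (2 * (df - dg) * (f t - g t))).
    ring.
Qed.

Lemma flow_cone_form_nonincreasing (X : R * R -> R * R) (phi : R -> R * R -> R * R) k q q' :
  cone_dissipative k X -> (forall p, phi 0 p = p) ->
  (forall t p, is_derive (fun t => phi t p) t (X (phi t p))) ->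
  cone_form k (vsub (phi 1 q') (phi 1 q)) <= cone_form k (vsub q' q).
Proof.
  intros Hdiss H0 Hd.
  destruct (MVT_cor2 (fun t => cone_form k (vsub (phi t q') (phi t q)))
    (fun t => let a := phi t q in let b := phi t q' in
       2 * (snd (X b) - snd (X a)) * (snd b - snd a)
       - k ^ 2 * (2 * (fst (X b) - fst (X a)) * (fst b - fst a))) 0 1)
    as [c [Hc _]]; [lra| |].
  - intros c _. apply is_derive_Reals.
    apply (is_derive_minus (fun t => (snd (phi t q') - snd (phi t q)) ^ 2)
             (fun t => k ^ 2 * (fst (phi t q') - fst (phi t q)) ^ 2)).
    + apply is_derive_sqr_sub; apply is_derive_snd, Hd.
    + apply is_derive_scal, is_derive_sqr_sub; apply is_derive_fst, Hd.
  - assert (Hn := Hdiss (phi c q) (phi c q')).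
    cbv zeta in Hc. rewrite !H0 in Hc. unfold cone_form, vsub in *; cbn [fst snd] in *. nra.
Qed.

Lemma is_flow_cone_form_nonincreasing alpha r0 psi phi k q q' :
  0 < r0 < 1 -> psi_ok alpha r0 psi -> is_flow psi phi -> 1 / 2 <= k <= 2 ->
  cone_form k (vsub (phi 1 q') (phi 1 q)) <= cone_form k (vsub q' q).
Proof.
  intros Hr Hpsi [H0 Hd] Hk.
  apply (flow_cone_form_nonincreasing (vfield psi)); [|exact H0|exact Hd].
  change (cone_dissipative k (radial_field (flow_rate psi))).
  apply radial_field_cone_dissipative; [exact Hk| |].
  - exact (flow_rate_nonneg alpha r0 psi Hpsi).
  - exact (flow_rate_monotone alpha r0 psi Hr Hpsi).
Qed.

Lemma at_right_lt c : 0 < c -> at_right 0 (fun t => 0 < t < c).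
Proof.
  intros Hc. exists (mkposreal c Hc). intros t Ht Hpos. split; [exact Hpos|].
  change (Rabs (t - 0) < c) in Ht. rewrite Rminus_0_r in Ht.
  exact (Rle_lt_trans _ _ _ (Rle_abs t) Ht).
Qed.

Lemma at_right_ex (P : R -> Prop) : at_right 0 P -> exists t, 0 < t /\ P t.
Proof.
  intros HP.
  destruct (Hierarchy.filter_ex (F := at_right 0) _ (filter_and _ _ (at_right_lt 1 Rlt_0_1) HP))
    as [t [[Ht _] H]].
  exists t. split; assumption.
Qed.

Definition right_tangent (e : R -> R) (l : R) : Prop :=
  forall eps, 0 < eps -> at_right 0 (fun t => Rabs (e t - t * l) <= eps * t).

Lemma is_derive_right_tangent (f : R -> R) l :
  is_derive f 0 l -> right_tangent (fun t => f t - f 0) l.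
Proof.
  intros Hf eps Heps.
  destruct (proj1 (is_derive_Reals f 0 l) Hf eps Heps) as [d Hd].
  exists d. intros t Ht Hpos.
  change (Rabs (t - 0) < d) in Ht. rewrite Rminus_0_r in Ht.
  specialize (Hd t (Rgt_not_eq _ _ Hpos) Ht). rewrite Rplus_0_l in Hd.
  replace (f t - f 0 - t * l) with (t * ((f t - f 0) / t - l)) by (field; lra).
  rewrite Rabs_mult, (Rabs_pos_eq t) by lra. nra.
Qed.

Lemma right_tangent_offset e l w a :
  right_tangent e l -> at_right 0 (fun t => e t = w + t * a) -> w = 0.
Proof.
  intros He Haff.
  destruct (Req_dec w 0) as [Hw|Hw]; [exact Hw|exfalso].
  set (C := 1 + Rabs (a - l)).
  assert (HC : 0 < C) by (unfold C; generalize (Rabs_pos (a - l)); lra).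
  assert (Hsmall := at_right_lt (Rabs w / C)
                      (Rdiv_lt_0_compat _ _ (Rabs_pos_lt w Hw) HC)).
  destruct (at_right_ex _ (filter_and _ _ (He 1 Rlt_0_1) (filter_and _ _ Haff Hsmall)))
    as [t [Ht [Hbound [Heq [_ Hlt]]]]].
  rewrite Heq in Hbound.
  assert (Htri : Rabs w <= Rabs (w + t * a - t * l) + Rabs (t * (a - l))).
  { replace w with ((w + t * a - t * l) + - (t * (a - l))) at 1 by ring.
    rewrite <- (Rabs_Ropp (t * _)). apply Rabs_triang. }
  rewrite Rabs_mult, (Rabs_pos_eq t) in Htri by lra.
  apply (Rmult_lt_compat_r C) in Hlt; [|exact HC].
  unfold Rdiv in Hlt. rewrite Rmult_assoc, Rinv_l, Rmult_1_r in Hlt by lra.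
  unfold C in Hlt. lra.
Qed.

Lemma quadratic_form_perturbation k l1 l2 x1 x2 t eps :
  0 < t -> 0 <= eps <= 1 -> Rabs x1 <= eps * t -> Rabs x2 <= eps * t ->
  t ^ 2 * (l2 ^ 2 - k ^ 2 * l1 ^ 2) - t ^ 2 * (eps * (2 * Rabs l2 + k ^ 2 * (2 * Rabs l1 + 1)))
  <= (t * l2 + x2) ^ 2 - k ^ 2 * (t * l1 + x1) ^ 2.
Proof.
  intros Ht Heps B1 B2.
  assert (Hk : 0 <= k ^ 2) by apply pow2_ge_0.
  assert (P1 : - (l2 * x2) <= Rabs l2 * (eps * t)).
  { eapply Rle_trans; [apply Rle_abs|].
    rewrite Rabs_Ropp, Rabs_mult. apply Rmult_le_compat_l; [apply Rabs_pos|exact B2]. }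
  assert (P2 : l1 * x1 <= Rabs l1 * (eps * t)).
  { eapply Rle_trans; [apply Rle_abs|].
    rewrite Rabs_mult. apply Rmult_le_compat_l; [apply Rabs_pos|exact B1]. }
  assert (P3 : x1 ^ 2 <= eps * t ^ 2).
  { rewrite <- pow2_abs.
    assert (Rabs x1 ^ 2 <= (eps * t) ^ 2) by (apply pow_incr; split; [apply Rabs_pos|exact B1]).
    assert (eps ^ 2 * t ^ 2 <= eps * t ^ 2) by (apply Rmult_le_compat_r; nra).
    nra. }
  assert (A1 : k ^ 2 * (2 * t * (l1 * x1)) <= k ^ 2 * (2 * t * (Rabs l1 * (eps * t))))
    by (apply Rmult_le_compat_l; nra).
  assert (A2 : k ^ 2 * x1 ^ 2 <= k ^ 2 * (eps * t ^ 2)) by (apply Rmult_le_compat_l; nra).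
  generalize (pow2_ge_0 x2). nra.
Qed.

Lemma right_tangent_quadratic_le k e1 e2 l1 l2 V :
  right_tangent e1 l1 -> right_tangent e2 l2 ->
  at_right 0 (fun t => e2 t ^ 2 - k ^ 2 * e1 t ^ 2 <= t ^ 2 * V) ->
  l2 ^ 2 - k ^ 2 * l1 ^ 2 <= V.
Proof.
  intros H1 H2 HV.
  destruct (Rle_or_lt (l2 ^ 2 - k ^ 2 * l1 ^ 2) V) as [Hle|Hgt]; [exact Hle|exfalso].
  remember (l2 ^ 2 - k ^ 2 * l1 ^ 2 - V) as g eqn:Eg.
  remember (2 * Rabs l2 + k ^ 2 * (2 * Rabs l1 + 1)) as C eqn:EC.
  assert (HC : 0 <= C).
  { subst C. generalize (Rabs_pos l1) (Rabs_pos l2) (pow2_ge_0 k). nra. }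
  (* this choice gives [eps <= 1] and [eps * C < g] *)
  remember (g / (2 * C + g)) as eps eqn:Eeps.
  assert (Heps : 0 < eps /\ eps * (2 * C + g) = g).
  { subst eps. split; [apply Rdiv_lt_0_compat; lra|field; lra]. }
  destruct Heps as [Heps HepsC].
  destruct (at_right_ex _ (filter_and _ _ (H1 eps Heps) (filter_and _ _ (H2 eps Heps) HV)))
    as [t [Ht [B1 [B2 Hbound]]]].
  assert (Hpert := quadratic_form_perturbation k l1 l2 _ _ t eps Ht ltac:(nra) B1 B2).
  replace (t * l1 + (e1 t - t * l1)) with (e1 t) in Hpert by ring.
  replace (t * l2 + (e2 t - t * l2)) with (e2 t) in Hpert by ring.
  rewrite <- EC in Hpert.
  assert (Hle : g <= eps * C).
  { apply (Rmult_le_reg_l (t ^ 2)); [apply pow_lt, Ht|]. subst g. lra. }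
  assert (0 < eps * g) by (apply Rmult_lt_0_compat; lra).
  assert (0 <= eps * C) by (apply Rmult_le_pos; lra).
  lra.
Qed.

Lemma filterdiff_is_derive_ray (G L : R * R -> R * R) p v :
  filterdiff G (locally p) L -> is_derive (fun t => G (ray p v t)) 0 (L v).
Proof.
  intros HG.
  assert (Hray : @filterdiff R_AbsRing R_NormedModule R2 (ray p v) (locally 0)
                   (fun t : R => scal t v)).
  { apply (filterdiff_ext_lin _ (fun t : R => plus zero (scal (V := R2) t v))).
    - apply (filterdiff_ext (fun t : R => plus p (scal (V := R2) t v))); [reflexivity|].
      apply filterdiff_plus_fct; [apply filterdiff_const|].
      apply filterdiff_linear, is_linear_scal_l.
    - intros t. apply plus_zero_l. }
  assert (Hp : ray p v 0 = p) by (unfold ray; destruct p; simpl; f_equal; ring).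
  rewrite <- Hp in HG.
  unfold is_derive.
  apply (filterdiff_ext_lin _ (fun t : R => L (scal (V := R2) t v))).
  - exact (filterdiff_comp' (ray p v) G 0 _ L Hray HG).
  - intros t. apply (linear_scal L (proj1 HG)).
Qed.

Lemma filterdiff_ray_tangents (G L : R * R -> R * R) p v :
  filterdiff G (locally p) L ->
  right_tangent (fun t => fst (G (ray p v t)) - fst (G p)) (fst (L v)) /\
  right_tangent (fun t => snd (G (ray p v t)) - snd (G p)) (snd (L v)).
Proof.
  intros HG. assert (HD := filterdiff_is_derive_ray G L p v HG).
  assert (Hp : ray p v 0 = p) by (unfold ray; destruct p; simpl; f_equal; ring).
  split.
  - assert (H := is_derive_right_tangent _ _ (is_derive_fst _ _ _ HD)).
    cbv beta in H. rewrite Hp in H. exact H.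
  - assert (H := is_derive_right_tangent _ _ (is_derive_snd _ _ _ HD)).
    cbv beta in H. rewrite Hp in H. exact H.
Qed.

Definition pdist (p q : R * R) : R := dist_euc (fst p) (snd p) (fst q) (snd q).

Lemma pdist_ray p v t t' :
  pdist (ray p v t) (ray p v t') = Rabs (t - t') * sqrt ((fst v)² + (snd v)²).
Proof.
  unfold pdist, dist_euc, ray; simpl.
  rewrite <- sqrt_Rsqr_abs, <- sqrt_mult_alt by apply Rle_0_sqr.
  f_equal. unfold Rsqr. ring.
Qed.

Lemma in_disk_pdist r m n p : in_disk r m n p -> pdist p (latt m n) <= sqrt r.
Proof. intros H. apply sqrt_le_1_alt. rewrite !Rsqr_pow2. exact H. Qed.

Lemma latt_pdist_sq m n m' n' :
  (pdist (latt m n) (latt m' n'))² = IZR ((m - m') * (m - m') + (n - n') * (n - n')).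
Proof.
  unfold pdist, dist_euc. rewrite Rsqr_sqrt by (apply Rplus_le_le_0_compat; apply Rle_0_sqr).
  rewrite plus_IZR, !mult_IZR, !minus_IZR.
  assert (HN : 0 < eigN).
  { apply sqrt_lt_R0. generalize (pow2_ge_0 (lam - 2)). lra. }
  assert (HN2 : eigN ^ 2 = 1 + (lam - 2) ^ 2).
  { unfold eigN. rewrite <- Rsqr_pow2, Rsqr_sqrt; [ring|]. generalize (pow2_ge_0 (lam - 2)). lra. }
  unfold latt, eig, Rsqr; simpl.
  apply (Rmult_eq_reg_r (eigN ^ 2)); [|nra].
  field_simplify; [rewrite HN2; ring|lra..].
Qed.

Lemma in_disk_segment r m n p v t0 t :
  in_disk r m n p -> in_disk r m n (ray p v t0) -> 0 < t0 -> 0 <= t <= t0 ->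
  in_disk r m n (ray p v t).
Proof.
  unfold in_disk, ray; cbn [fst snd]. intros H0 H1 Ht0 Ht.
  set (x1 := fst p - fst (latt m n)) in *. set (x2 := snd p - snd (latt m n)) in *.
  replace (fst p + t * fst v - fst (latt m n)) with (x1 + t * fst v) by (unfold x1; ring).
  replace (snd p + t * snd v - snd (latt m n)) with (x2 + t * snd v) by (unfold x2; ring).
  replace (fst p + t0 * fst v - fst (latt m n)) with (x1 + t0 * fst v) in H1 by (unfold x1; ring).
  replace (snd p + t0 * snd v - snd (latt m n)) with (x2 + t0 * snd v) in H1 by (unfold x2; ring).
  assert (Hv : 0 <= fst v ^ 2 + snd v ^ 2)
    by (generalize (pow2_ge_0 (fst v)) (pow2_ge_0 (snd v)); lra).
  (* the squared distance to the centre is a convex function of [t] *)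
  apply (Rmult_le_reg_l t0); [exact Ht0|].
  assert (E : t0 * ((x1 + t * fst v) ^ 2 + (x2 + t * snd v) ^ 2)
    = (t0 - t) * (x1 ^ 2 + x2 ^ 2) + t * ((x1 + t0 * fst v) ^ 2 + (x2 + t0 * snd v) ^ 2)
      - t * (t0 - t) * t0 * (fst v ^ 2 + snd v ^ 2)) by ring.
  rewrite E.
  assert (0 <= t * (t0 - t) * t0 * (fst v ^ 2 + snd v ^ 2)).
  { repeat apply Rmult_le_pos; lra. }
  assert ((t0 - t) * (x1 ^ 2 + x2 ^ 2) <= (t0 - t) * r) by (apply Rmult_le_compat_l; lra).
  assert (t * ((x1 + t0 * fst v) ^ 2 + (x2 + t0 * snd v) ^ 2) <= t * r)
    by (apply Rmult_le_compat_l; lra).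
  lra.
Qed.

Lemma not_in_disk_ray r m n p v :
  ~ in_disk r m n p -> at_right 0 (fun t => ~ in_disk r m n (ray p v t)).
Proof.
  unfold in_disk, ray; cbn [fst snd]. intros Hout.
  set (x1 := fst p - fst (latt m n)). set (x2 := snd p - snd (latt m n)).
  set (gap := x1 ^ 2 + x2 ^ 2 - r).
  assert (Hgap : 0 < gap) by (unfold gap, x1, x2; lra).
  set (b := x1 * fst v + x2 * snd v).
  assert (Hb := Rabs_pos b).
  apply (filter_imp (fun t => 0 < t < gap / (2 * Rabs b + 1))).
  - intros t [Ht Htc] Hin.
    apply (Rmult_lt_compat_r (2 * Rabs b + 1)) in Htc; [|lra].
    unfold Rdiv in Htc. rewrite Rmult_assoc, Rinv_l, Rmult_1_r in Htc by lra.
    assert (- b <= Rabs b) by (rewrite <- Rabs_Ropp; apply Rle_abs).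
    assert (0 <= t ^ 2 * (fst v ^ 2 + snd v ^ 2)).
    { apply Rmult_le_pos; [apply pow2_ge_0|].
      generalize (pow2_ge_0 (fst v)) (pow2_ge_0 (snd v)); lra. }
    replace ((fst p + t * fst v - fst (latt m n)) ^ 2 + (snd p + t * snd v - snd (latt m n)) ^ 2)
      with (gap + r + 2 * t * b + t ^ 2 * (fst v ^ 2 + snd v ^ 2)) in Hin
      by (unfold gap, b, x1, x2; ring).
    nra.
  - apply at_right_lt, Rdiv_lt_0_compat; lra.
Qed.

Section DisjointDisks.

Variable r0 : R.
Hypothesis r0_pos : 0 < r0.
Hypothesis disks_disjoint : forall m1 n1 m2 n2 p,
  in_disk r0 m1 n1 p -> in_disk r0 m2 n2 p -> m1 = m2 /\ n1 = n2.

(* Squared distances between lattice points are integers, so disjointness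
   [4 r0 < d^2] self-improves to [up (4 r0) <= d^2]: this is the uniform gap. *)
Definition disk_gap : R := sqrt (IZR (up (4 * r0))) - 2 * sqrt r0.

Lemma disk_gap_pos : 0 < disk_gap.
Proof.
  unfold disk_gap. destruct (archimed (4 * r0)) as [Hup _].
  assert (Hlt : sqrt (4 * r0) < sqrt (IZR (up (4 * r0)))) by (apply sqrt_lt_1_alt; lra).
  rewrite sqrt_mult_alt in Hlt by lra.
  replace (sqrt 4) with 2 in Hlt; [lra|].
  replace 4 with (2 * 2) by ring. symmetry. apply sqrt_square. lra.
Qed.

Lemma latt_pdist_ge m n m' n' :
  ~ (m = m' /\ n = n') -> sqrt (IZR (up (4 * r0))) <= pdist (latt m n) (latt m' n').
Proof.
  intros Hne.
  set (c := latt m n). set (c' := latt m' n').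
  assert (Hsep : 4 * r0 < (pdist c c')²).
  { destruct (Rlt_or_le (4 * r0) (pdist c c')²) as [H|H]; [exact H|exfalso].
    unfold pdist, dist_euc in H.
    rewrite Rsqr_sqrt in H by (apply Rplus_le_le_0_compat; apply Rle_0_sqr).
    apply Hne, (disks_disjoint m n m' n' ((fst c + fst c') / 2, (snd c + snd c') / 2));
      unfold in_disk; fold c c'; cbn [fst snd]; unfold Rsqr in H; nra. }
  unfold c, c' in Hsep. rewrite latt_pdist_sq in Hsep.
  rewrite <- (sqrt_Rsqr (pdist _ _)) by apply sqrt_pos.
  apply sqrt_le_1_alt. unfold c, c'. rewrite latt_pdist_sq.
  destruct (archimed (4 * r0)) as [_ Hup].
  apply IZR_le.
  destruct (Z_lt_le_dec ((m - m') * (m - m') + (n - n') * (n - n')) (up (4 * r0)))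
    as [Hlt|Hle]; [exfalso|exact Hle].
  apply Z.lt_le_pred, IZR_le in Hlt. rewrite <- Z.sub_1_r, minus_IZR in Hlt. lra.
Qed.

Lemma in_disks_close m n m' n' y y' :
  in_disk r0 m n y -> in_disk r0 m' n' y' -> pdist y y' < disk_gap -> m = m' /\ n = n'.
Proof.
  intros Hy Hy' Hclose.
  destruct (classic (m = m' /\ n = n')) as [E|Hne]; [exact E|exfalso].
  assert (Hfar := latt_pdist_ge m n m' n' Hne).
  apply in_disk_pdist in Hy. apply in_disk_pdist in Hy'.
  assert (T1 := triangle (fst (latt m n)) (snd (latt m n)) (fst (latt m' n')) (snd (latt m' n'))
                         (fst y) (snd y)).
  assert (T2 := triangle (fst y) (snd y) (fst (latt m' n')) (snd (latt m' n')) (fst y') (snd y')).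
  rewrite (distance_symm (fst (latt m n)) (snd (latt m n)) (fst y) (snd y)) in T1.
  unfold pdist, disk_gap in *. lra.
Qed.

Definition ray_gap (v : R * R) : R := disk_gap / (sqrt ((fst v)² + (snd v)²) + 1).

Lemma ray_gap_pos v : 0 < ray_gap v.
Proof.
  apply Rdiv_lt_0_compat; [apply disk_gap_pos|]. generalize (sqrt_pos ((fst v)² + (snd v)²)). lra.
Qed.

Lemma ray_in_disks_eq p v m n m' n' t t' :
  0 <= t < ray_gap v -> 0 <= t' < ray_gap v ->
  in_disk r0 m n (ray p v t) -> in_disk r0 m' n' (ray p v t') -> m = m' /\ n = n'.
Proof.
  intros Ht Ht' Hin Hin'. apply (in_disks_close _ _ _ _ _ _ Hin Hin').
  rewrite pdist_ray.
  set (nv := sqrt ((fst v)² + (snd v)²)).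
  assert (Hnv : 0 <= nv) by apply sqrt_pos.
  assert (Habs : Rabs (t - t') < ray_gap v) by (apply Rabs_def1; lra).
  unfold ray_gap in Habs. fold nv in Habs.
  apply (Rmult_lt_compat_r (nv + 1)) in Habs; [|lra].
  unfold Rdiv in Habs. rewrite Rmult_assoc, Rinv_l, Rmult_1_r in Habs by lra.
  generalize (Rabs_pos (t - t')). nra.
Qed.

Lemma ray_enters_disk_or_avoids_all p v :
  (exists m n, in_disk r0 m n p /\ at_right 0 (fun t => in_disk r0 m n (ray p v t))) \/
  at_right 0 (fun t => forall m n, ~ in_disk r0 m n (ray p v t)).
Proof.
  destruct (classic (exists m n t1, 0 < t1 < ray_gap v /\ in_disk r0 m n (ray p v t1)))
    as [[m [n [t1 [Ht1 Hin1]]]]|Hnone].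
  - destruct (classic (in_disk r0 m n p)) as [Hp|Hp].
    + left. exists m, n. split; [exact Hp|].
      apply (filter_imp (fun t => 0 < t < t1)); [|apply at_right_lt; lra].
      intros t Ht. apply (in_disk_segment _ _ _ _ _ t1); lra || assumption.
    + right.
      apply (filter_imp (fun t => 0 < t < ray_gap v /\ ~ in_disk r0 m n (ray p v t))).
      * intros t [Ht Hout] m' n' Hin.
        destruct (ray_in_disks_eq p v m n m' n' t1 t ltac:(lra) ltac:(lra) Hin1 Hin)
          as [<- <-].
        exact (Hout Hin).
      * apply filter_and; [apply at_right_lt, ray_gap_pos|apply not_in_disk_ray, Hp].
  - right. apply (filter_imp (fun t => 0 < t < ray_gap v)); [|apply at_right_lt, ray_gap_pos].
    intros t Ht m n Hin. apply Hnone. exists m, n, t. split; assumption.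
Qed.

End DisjointDisks.

Lemma Aeig_ray_sub p v t :
  vsub (Aeig (ray p v t)) (Aeig p) = (t * fst (Aeig v), t * snd (Aeig v)).
Proof.
  assert (Hl := lam_gt_1). unfold vsub, Aeig, ray; cbn [fst snd]. f_equal; field; lra.
Qed.

Lemma G_ray_increment_cone_form alpha r0 psi phi G (p v : R * R) L k :
  0 < r0 < 1 ->
  (forall m1 n1 m2 n2 q, in_disk r0 m1 n1 q -> in_disk r0 m2 n2 q -> m1 = m2 /\ n1 = n2) ->
  psi_ok alpha r0 psi -> is_flow psi phi -> is_G r0 phi G ->
  filterdiff G (locally p) L -> 1 / 2 <= k <= 2 ->
  at_right 0 (fun t => cone_form k (vsub (G (ray p v t)) (G p)) <= t ^ 2 * cone_form k v).
Proof.
  intros Hr Hdisj Hpsi Hflow [HGdisk HGout] HL Hk.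
  destruct (ray_enters_disk_or_avoids_all r0 (proj1 Hr) Hdisj p v)
    as [[m [n [Hp Hray]]]|Hout].
  - eapply filter_imp; [|exact Hray]. intros t Ht.
    rewrite (HGdisk m n _ Ht), (HGdisk m n _ Hp). cbv zeta.
    set (c := latt m n).
    assert (Hmono := is_flow_cone_form_nonincreasing alpha r0 psi phi k
      (fst p - fst c, snd p - snd c) (fst (ray p v t) - fst c, snd (ray p v t) - snd c)
      Hr Hpsi Hflow Hk).
    unfold cone_form, vsub, ray in *; cbn [fst snd] in *.
    lra.
  - assert (HA : at_right 0 (fun t => G (ray p v t) = Aeig (ray p v t)))
      by exact (filter_imp _ _ (fun t Ht => HGout _ Ht) Hout).
    (* differentiability forces [G p = Aeig p] even when [p] lies on a disk *)
    assert (HGp : G p = Aeig p).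
    { destruct (filterdiff_ray_tangents G L p v HL) as [T1 T2].
      assert (Hl := lam_gt_1).
      apply injective_projections; apply Rminus_diag_uniq_sym.
      - apply (right_tangent_offset _ _ _ (fst (Aeig v)) T1).
        eapply filter_imp; [|exact HA]. intros t Ht.
        rewrite Ht. unfold Aeig, ray; cbn [fst snd]. ring.
      - apply (right_tangent_offset _ _ _ (snd (Aeig v)) T2).
        eapply filter_imp; [|exact HA]. intros t Ht.
        rewrite Ht. unfold Aeig, ray; cbn [fst snd]. field. lra. }
    eapply filter_imp; [|exact HA]. intros t Ht.
    rewrite Ht, HGp, Aeig_ray_sub, cone_form_scal.
    apply Rmult_le_compat_l; [apply pow2_ge_0|apply cone_form_Aeig_le].
Qed.

Lemma G_derivative_cone_form_le alpha r0 psi phi G (p v : R * R) L k :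
  0 < r0 < 1 ->
  (forall m1 n1 m2 n2 q, in_disk r0 m1 n1 q -> in_disk r0 m2 n2 q -> m1 = m2 /\ n1 = n2) ->
  psi_ok alpha r0 psi -> is_flow psi phi -> is_G r0 phi G ->
  filterdiff G (locally p) L -> 1 / 2 <= k <= 2 ->
  cone_form k (L v) <= cone_form k v.
Proof.
  intros Hr Hdisj Hpsi Hflow HG HL Hk.
  destruct (filterdiff_ray_tangents G L p v HL) as [T1 T2].
  exact (right_tangent_quadratic_le k _ _ _ _ _ T1 T2
           (G_ray_increment_cone_form alpha r0 psi phi G p v L k Hr Hdisj Hpsi Hflow HG HL Hk)).
Qed.

Theorem lemma5p4 (alpha r0 : R) (psi : R -> R) (phi : R -> R * R -> R * R)
  (G : R * R -> R * R) :
  0 < alpha < 1 -> 0 < r0 < 1 ->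
  (forall m1 n1 m2 n2 p, in_disk r0 m1 n1 p -> in_disk r0 m2 n2 p ->
     m1 = m2 /\ n1 = n2) ->
  psi_ok alpha r0 psi -> is_flow psi phi -> is_G r0 phi G ->
  exists mu0, 0 < mu0 < 1 /\
    forall mu, mu0 < mu < 1 ->
    forall (p : R * R) (L : R * R -> R * R),
      filterdiff G (locally p) L ->
      (forall v, Kplus mu v -> Kplus mu (L v)) /\
      (forall w, Kminus mu (L w) -> Kminus mu w).
Proof.
  intros _ Hr Hdisj Hpsi Hflow HG.
  exists (1 / 2). split; [lra|]. intros mu Hmu p L HL.
  assert (Hle : forall k v, 1 / 2 <= k <= 2 -> cone_form k (L v) <= cone_form k v)
    by (intros k v Hk; exact (G_derivative_cone_form_le alpha r0 psi phi G p v L k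
                                Hr Hdisj Hpsi Hflow HG HL Hk)).
  split.
  - intros v Hv. apply Kplus_cone_form in Hv; [|lra].
    apply Kplus_cone_form; [lra|]. specialize (Hle mu v ltac:(lra)). lra.
  - intros w Hw. apply Kminus_cone_form in Hw; [|lra].
    apply Kminus_cone_form; [lra|].
    assert (Hinv : 1 / 2 <= / mu <= 2).
    { split; apply (Rmult_le_reg_r mu); try lra; rewrite Rinv_l; lra. }
    specialize (Hle (/ mu) w Hinv). lra.
Qed.
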